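(* Let $n$ be a natural number with prime factorisation $n=p_1^{\alpha_1}\cdots p_t^{\alpha_t}$. Then every skew brace of order $n$ is left-nilpotent if and only if $p_i$ does not divide $p_j^k-1$ for all $i\neq j$ and all $1\le k\le\alpha_j$.
   Context: A skew brace is a set $A$ with two group structures $(A,+)$ and $(A,\circ)$ such that $a\circ(b+c)=a\circ b-a+a\circ c$ for all $a,b,c\in A$; its order is $|A|$. Put $a*b=-a+a\circ b-b$ and for subsets $X,Y$ let $X*Y$ be the subgroup of $(A,+)$ generated by all $x*y$ with $x\in X,y\in Y$. Define $A^1=A$ and $A^{m+1}=A*A^m$; $A$ is left-nilpotent if $A^m=\{0\}$ for some $m$. *)

From mathcomp Require Import all_boot.
Set Implicit Arguments. Unset Strict Implicit. Unset Printing Implicit Defensive.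

Record skew_brace (A : finType) := SkewBrace {
  sb_add : A -> A -> A;
  sb_zero : A;
  sb_opp : A -> A;
  sb_circ : A -> A -> A;
  sb_one : A;
  sb_inv : A -> A;
  sb_addA : forall a b c, sb_add a (sb_add b c) = sb_add (sb_add a b) c;
  sb_add0l : forall a, sb_add sb_zero a = a;
  sb_add0r : forall a, sb_add a sb_zero = a;
  sb_addNl : forall a, sb_add (sb_opp a) a = sb_zero;
  sb_addNr : forall a, sb_add a (sb_opp a) = sb_zero;
  sb_circA : forall a b c, sb_circ a (sb_circ b c) = sb_circ (sb_circ a b) c;
  sb_circ1l : forall a, sb_circ sb_one a = a;
  sb_circ1r : forall a, sb_circ a sb_one = a;
  sb_circVl : forall a, sb_circ (sb_inv a) a = sb_one;
  sb_circVr : forall a, sb_circ a (sb_inv a) = sb_one;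
  sb_brace : forall a b c,
    sb_circ a (sb_add b c) = sb_add (sb_add (sb_circ a b) (sb_opp a)) (sb_circ a c)
}.

Section SkewBraceDefs.
Variables (A : finType) (B : skew_brace A).

Definition sb_star (a b : A) : A :=
  sb_add B (sb_add B (sb_opp B a) (sb_circ B a b)) (sb_opp B b).

Definition is_add_subgroup (S : {set A}) : bool :=
  [&& sb_zero B \in S,
      [forall x in S, forall y in S, sb_add B x y \in S] &
      [forall x in S, sb_opp B x \in S]].

Definition add_gen (X : {set A}) : {set A} :=
  [set x | [forall S : {set A}, ((X \subset S) && is_add_subgroup S) ==> (x \in S)]].

Definition sb_star_set (X Y : {set A}) : {set A} :=
  add_gen [set sb_star x y | x in X, y in Y].

(* left_series k = A^(k+1):  A^1 = A, A^(m+1) = A * A^m *)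
Fixpoint left_series (k : nat) : {set A} :=
  match k with
  | 0 => [set: A]
  | k'.+1 => sb_star_set [set: A] (left_series k')
  end.

Definition left_nilpotent : Prop :=
  exists k : nat, left_series k = [set sb_zero B].

End SkewBraceDefs.

From mathcomp Require Import all_boot all_algebra all_fingroup all_solvable.
From mathcomp Require Import all_field all_character ring.
Set Implicit Arguments. Unset Strict Implicit. Unset Printing Implicit Defensive.
Import GRing.Theory.

(* Let T and L be the permutation groups of A formed by the maps x |-> a + x
   and x |-> a o x.  L normalises T, and a * b is the translation by the
   commutator of x |-> b + x with lambda_a : x |-> - a + a o x, so A^m is
   mapped into the m-th term of the lower central series of T L: B is
   left-nilpotent as soon as T L is nilpotent.
   Under Pazderski's condition on n = |A|, a p-group R normalising a q-group Q
   (of orders dividing n) centralises Q, because |Q| = |C_Q(R)| mod p while p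
   divides no q^j - 1 with 1 <= j <= log_q n.  With a minimal counterexample
   argument (either a q-core of a normal nilpotent subgroup has central fixed
   points, or G is simple and its nilpotent maximal subgroups are pairwise TI,
   hence Frobenius complements) this makes every group of order dividing n
   nilpotent.  So T and L are nilpotent, their cores for distinct primes
   commute, and T L is generated by the normal p-subgroups O_p(T) O_p(L).
   Conversely, if p | q^k - 1 then p | m = n / q^k, and an element u of order
   p in F_(q^k)^* makes F_(q^k) x| Z_m a brace of order n in which
   (y, 0) = (0, 1) * ((u - 1)^-1 y, 0) lies in every A^j. *)

(* Pazderski's arithmetic characterisation of the orders n all of whose
   groups are nilpotent. *)
Definition pazderski (n : nat) : Prop :=
  forall p q : nat, p \in primes n -> q \in primes n -> p != q ->
    forall k : nat, 1 <= k <= logn q n -> ~~ (p %| q ^ k - 1).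

Lemma pazderski_expn_mod n p q e a : pazderski n ->
  p \in primes n -> q \in primes n -> p != q -> e <= a <= logn q n ->
  q ^ a = q ^ e %[mod p] -> a = e.
Proof.
move=> nP pn qn neqpq /andP[le_ea le_an] /eqP.
have [pr_p pr_q] : prime p /\ prime q.
  by move: pn qn; rewrite !mem_primes => /andP[-> _] /andP[-> _].
have [// | lt_ea] := eqVneq a e; rewrite eqn_mod_dvd ?leq_pexp2l ?prime_gt0 //.
have -> : q ^ a - q ^ e = q ^ e * (q ^ (a - e) - 1).
  by rewrite mulnBr muln1 -expnD subnKC.
rewrite Gauss_dvdr; last by rewrite coprimeXr // prime_coprime // dvdn_prime2.
apply/contraTeq => _; apply: (nP _ _ pn qn neqpq).
by rewrite subn_gt0 ltn_neqAle eq_sym lt_ea le_ea (leq_trans (leq_subr _ _)).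
Qed.

Local Open Scope group_scope.

Lemma pazderski_norm_cent n (p q : nat) (gT : finGroupType) (R Q : {group gT}) :
    0 < n -> pazderski n -> p != q ->
    p.-group R -> q.-group Q -> R \subset 'N(Q) -> #|R| %| n -> #|Q| %| n ->
  R \subset 'C(Q).
Proof.
move=> n_gt0 nP neqpq pR qQ nQR dvdRn dvdQn.
have [-> | ntR] := eqVneq R 1%G; first exact: sub1G.
have [-> | ntQ] := eqVneq Q 1%G; first exact: cents1.
have [pr_p p_dvdR _] := pgroup_pdiv pR ntR.
have [pr_q q_dvdQ _] := pgroup_pdiv qQ ntQ.
have pn : p \in primes n by rewrite mem_primes pr_p n_gt0 (dvdn_trans p_dvdR).
have qn : q \in primes n by rewrite mem_primes pr_q n_gt0 (dvdn_trans q_dvdQ).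
have sCQ : Q :&: 'C(R) \subset Q := subsetIl _ _.
have actsRQ : [acts R, on Q | 'J] by rewrite astabsJ.
have := pgroup_fix_mod pR actsRQ; rewrite afixJ.
rewrite (card_pgroup qQ) (card_pgroup (pgroupS sCQ qQ)) => fixQ.
have logs_le : logn q #|Q :&: 'C(R)| <= logn q #|Q| <= logn q n.
  by rewrite !dvdn_leq_log ?cardG_gt0 ?cardSg.
have eq_logs := pazderski_expn_mod nP pn qn neqpq logs_le fixQ.
have eqQC : Q :&: 'C(R) = Q.
  apply/eqP; rewrite eqEcard sCQ (card_pgroup qQ) (card_pgroup (pgroupS sCQ qQ)).
  by rewrite eq_logs andTb leqnn.
by rewrite centsC -eqQC subsetIr.
Qed.

Section MaximalSubgroups.
Variable gT : finGroupType.
Implicit Types G H M : {group gT}.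

Lemma maximal_properI G M1 M2 :
  maximal M1 G -> maximal M2 G -> M1 != M2 -> M1 :&: M2 \proper M1.
Proof.
move=> maxM1 maxM2 neqM12; rewrite properEneq subsetIl andbT.
apply: contra neqM12 => /eqP eqI; apply/eqP/val_inj/esym => /=.
have [_ maxM1G] := maxgroupP maxM1.
by apply: maxM1G (maxgroupp maxM2) _; rewrite -eqI subsetIr.
Qed.

Variable G : {group gT}.
Hypothesis nil_proper : forall H, H \proper G -> nilpotent H.
Hypothesis simpleG : forall N : {group gT}, N <| G -> N :=: 1 \/ N :=: G.

Lemma maximalI_trivial M1 M2 :
  maximal M1 G -> maximal M2 G -> M1 != M2 -> M1 :&: M2 = 1.
Proof.
(* If I := M1 :&: M2 <> 1, the normaliser of I is a proper subgroup whose
   maximal overgroup meets each Mi in more than I; by induction on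
   |G| - |M1 :&: M2| it must equal both M1 and M2. *)
have [m] := ubnP (#|G| - #|M1 :&: M2|); elim: m M1 M2 => // m IHm M1 M2.
move=> /ltnSE-le_m maxM1 maxM2 neqM12; apply/eqP/contraT => ntI.
set I := M1 :&: M2 in le_m ntI.
have properI1 : I \proper M1 := maximal_properI maxM1 maxM2 neqM12.
have properI2 : I \proper M2.
  by rewrite /I setIC (maximal_properI maxM2 maxM1) // eq_sym.
have sIG : I \subset G := subset_trans (subsetIl _ _) (proper_sub (maxgroupp maxM1)).
have [normG_I | [M maxM sNM]] := maximal_exists (subsetIl G 'N(I)).
  have nsIG : I <| G by rewrite /normal sIG -normG_I subsetIr.
  case: (simpleG nsIG) => /= [I1 | IG]; first by rewrite /I I1 eqxx in ntI.
  by move: properI1; rewrite /I IG properE (proper_sub (maxgroupp maxM1)) andbF.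
suff eqMi (Mi : {group gT}) : maximal Mi G -> I \proper Mi -> M = Mi.
  by rewrite -(eqMi M1 maxM1 properI1) -(eqMi M2 maxM2 properI2) eqxx in neqM12.
move=> maxMi properIMi; apply/eqP/contraT => neqMMi.
have properIN : I \proper 'N_Mi(I).
  exact: nilpotent_proper_norm (nil_proper (maxgroupp maxMi)) properIMi.
have sNMMi : 'N_Mi(I) \subset M :&: Mi.
  rewrite subsetI subsetIl andbT (subset_trans _ sNM) // setSI //.
  exact: proper_sub (maxgroupp maxMi).
have ltI : #|I| < #|M :&: Mi| := proper_card (proper_sub_trans properIN sNMMi).
have leG : #|M :&: Mi| <= #|G|.
  by rewrite subset_leq_card // subIset // proper_sub // (maxgroupp maxM).
have MMi1 : M :&: Mi = 1.
  by apply: IHm => //; apply: leq_trans le_m; rewrite ltn_sub2l // (leq_trans ltI).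
by case/negP: ntI; rewrite -subG1 -MMi1 (subset_trans (proper_sub properIN)).
Qed.

Hypothesis noncyclicG : ~~ cyclic G.

Lemma maximal_nontrivial M : maximal M G -> M :!=: 1.
Proof.
move=> maxM; apply: contra noncyclicG => /eqP M1.
have [x Gx ntx] : exists2 x, x \in G & x != 1.
  by apply/trivgPn; apply: contra noncyclicG => /eqP->; apply: cyclic1.
suff <- : <[x]> = G by apply: cycle_cyclic.
apply/eqP/contraT => neqxG; have [_ /(_ <[x]>%G)] := maxgroupP maxM.
rewrite M1 sub1G properEneq neqxG cycle_subG Gx => /(_ isT isT) /eqP.
by rewrite cycle_eq1 (negbTE ntx).
Qed.

Lemma maximal_norm M : maximal M G -> 'N_G(M) = M.
Proof.
move=> maxM; have properM := maxgroupp maxM.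
have sMN : M \subset 'N_G(M) by rewrite subsetI proper_sub // normG.
have [normG_M | neqNG] := eqVneq 'N_G(M) G; last first.
  have [_ maxMG] := maxgroupP maxM.
  by apply: (maxMG _ _ sMN); rewrite properEneq neqNG subsetIl.
have nsMG : M <| G by rewrite /normal proper_sub // -normG_M subsetIr.
case: (simpleG nsMG) => [M1 | MG].
  by have := maximal_nontrivial maxM; rewrite M1 eqxx.
by move: properM; rewrite MG properE subxx.
Qed.

Lemma maximal_Frobenius_compl M : maximal M G -> [Frobenius G with complement M].
Proof.
move=> maxM; have properM := maxgroupp maxM.
apply/andP; split; first by rewrite proper_neq.
apply/normedTI_P; split.
- by rewrite setD_eq0 subG1 maximal_nontrivial.
- by rewrite subsetI proper_sub // normD1 normG.
move=> g Gg /pred0Pn[y /andP[/= My]]; rewrite conjD1g => /setD1P[nty Mgy].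
have maxMg : maximal (M :^ g)%G G by rewrite /= -(conjGid Gg) maximalJ.
have [eqMMg | neqMMg] := eqVneq M (M :^ g)%G.
  rewrite -(maximal_norm maxM) inE Gg; apply/normP.
  by move/(congr1 val): eqMMg => /= <-.
have := maximalI_trivial maxM maxMg neqMMg.
by move/setP/(_ y); rewrite !inE Mgy (setD1P My).2 (negbTE nty).
Qed.

End MaximalSubgroups.

Lemma simple_nil_proper_cyclic (gT : finGroupType) (G : {group gT}) :
    (forall H : {group gT}, H \proper G -> nilpotent H) ->
    (forall N : {group gT}, N <| G -> N :=: 1 \/ N :=: G) ->
  cyclic G.
Proof.
move=> nil_proper simpleG; apply/contraT => noncyclicG.
have [G1 | [M maxM _]] := maximal_exists (sub1G G).
  by rewrite -G1 cyclic1 in noncyclicG.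
have frobM := maximal_Frobenius_compl nil_proper simpleG noncyclicG maxM.
have [K /FrobeniusWker/Frobenius_kerP[ntK properK nsKG _]] :=
  Frobenius_kernel_exists frobM.
case: (simpleG K nsKG) => eqK; first by rewrite eqK eqxx in ntK.
by rewrite eqK properE subxx in properK.
Qed.

Lemma Sylow_transversal_eq (gT : finGroupType) (G H : {group gT}) :
    H \subset G ->
    (forall p, p \in \pi(G) -> exists2 P : {group gT}, p.-Sylow(G) P & P \subset H) ->
  H :=: G.
Proof.
move=> sHG sylH; apply/eqP; rewrite eqEsubset sHG /=.
rewrite -(@Sylow_transversal_gen _ [set P : {group gT} | P \subset H] G).
- by rewrite gen_subG; apply/bigcupsP => P; rewrite inE.
- by move=> P; rewrite inE => /subset_trans->.
by move=> p /sylH[P sylP sPH]; exists P; rewrite ?inE.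
Qed.

Lemma pazderski_center_nontrivial n (gT : finGroupType) (G N : {group gT}) :
    0 < n -> pazderski n -> #|G| %| n ->
  N <| G -> N :!=: 1 -> nilpotent N -> 'Z(G) :!=: 1.
Proof.
move=> n_gt0 nP dvdGn nsNG ntN nilN; have sNG := normal_sub nsNG.
pose q := pdiv #|N|; have pr_q : prime q by rewrite pdiv_prime ?cardG_gt1.
pose K := 'O_q(N)%G; have qK : q.-group K := pcore_pgroup q N.
have ntK : K :!=: 1.
  rewrite -cardG_gt1 (card_Hall (nilpotent_pcore_Hall q nilN)) p_part_gt1.
  by rewrite mem_primes pr_q cardG_gt0 pdiv_dvd.
have [_ q_dvdK _] := pgroup_pdiv qK ntK.
have sKG : K \subset G := subset_trans (pcore_sub q N) sNG.
have nKG : G \subset 'N(K) := normal_norm (char_normal_trans (pcore_char q N) nsNG).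
have [Q sylQ] := Sylow_exists q G; have [sQG qQ _] := and3P sylQ.
have ntZ : K :&: 'C(Q) != 1.
  have actsQK : [acts Q, on K | 'J] by rewrite astabsJ (subset_trans sQG).
  have := pgroup_fix_mod qQ actsQK; rewrite afixJ => modKZ.
  have q_dvdZ : q %| #|K :&: 'C(Q)| by rewrite /dvdn -modKZ.
  rewrite -cardG_gt1 (leq_trans (prime_gt1 pr_q)) //.
  exact: dvdn_leq (cardG_gt0 _) q_dvdZ.
(* Q centralises K :&: 'C(Q), and each Sylow p-subgroup, p <> q, all of K. *)
suff sZZG : K :&: 'C(Q) \subset 'Z(G).
  by apply: contraNneq ntZ => ZG1; rewrite -subG1 -ZG1.
rewrite subsetI (subset_trans (subsetIl _ _) sKG) centsC /=.
rewrite -(Sylow_transversal_eq (subsetIl G 'C(K :&: 'C(Q)))) ?subsetIr // => p _.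
have [P sylP] := Sylow_exists p G; have [sPG pP _] := and3P sylP.
have [-> | neqpq] := eqVneq p q.
  by exists Q; rewrite // subsetI sQG centsC subsetIr.
exists P; rewrite // subsetI sPG (subset_trans _ (centS (subsetIl K _))) //.
apply: (pazderski_norm_cent n_gt0 nP neqpq pP qK).
- exact: subset_trans sPG nKG.
- exact: dvdn_trans (cardSg sPG) dvdGn.
- exact: dvdn_trans (cardSg sKG) dvdGn.
Qed.

Theorem pazderski_nilpotent n (gT : finGroupType) (G : {group gT}) :
  0 < n -> pazderski n -> #|G| %| n -> nilpotent G.
Proof.
move=> n_gt0 nP; move: {2}#|G| (leqnn #|G|) => m; elim: m gT G => [|m IHm] gT G.
  by rewrite leqNgt cardG_gt0.
move=> le_Gm dvdGn.
have nil_proper (H : {group gT}) : H \proper G -> nilpotent H.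
  move=> properHG; apply: IHm (dvdn_trans (cardSg (proper_sub properHG)) dvdGn).
  by rewrite -ltnS (leq_trans (proper_card properHG)).
have [/existsP[N /and3P[nsNG ntN neqNG]] | no_normal] :=
  boolP [exists N : {group gT}, [&& N <| G, N :!=: 1 & N :!=: G]]; last first.
  apply/abelian_nil/cyclic_abelian/simple_nil_proper_cyclic => // N nsNG.
  have [-> | ntN] := eqVneq N 1%G; first by left.
  have [-> | neqNG] := eqVneq N G; first by right.
  by case/negP: no_normal; apply/existsP; exists N; rewrite nsNG ntN neqNG.
have nilN : nilpotent N by rewrite nil_proper // properEneq neqNG normal_sub.
have ntZ := pazderski_center_nontrivial n_gt0 nP dvdGn nsNG ntN nilN.
rewrite -quotient_center_nil; apply: IHm; last exact: dvdn_trans (dvdn_quotient _ _) _.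
by rewrite -ltnS (leq_trans _ le_Gm) // ltn_quotient ?center_sub.
Qed.

Section NilpotentJoin.
Variable gT : finGroupType.
Implicit Types (p r : nat) (K T L X : {group gT}).

Lemma pcore_cent_pcore X p r : p != r -> 'O_p(X) \subset 'C('O_r(X)).
Proof.
move=> neqpr; apply/commG1P/trivgP.
have nOpX := normal_norm (pcore_normal p X).
have nOrX := normal_norm (pcore_normal r X).
have <- : 'O_p(X) :&: 'O_r(X) = 1.
  apply: coprime_TIg (sub_pnat_coprime _ (pcore_pgroup p X) (pcore_pgroup r X)).
  by move=> x; rewrite !inE => /eqP->; rewrite eq_sym.
by apply: commg_subI; rewrite subsetI subxx ?(subset_trans (pcore_sub _ _)).
Qed.

Lemma nilpotent_pcores_subG T K :
  nilpotent T -> (forall r, 'O_r(T) \subset K) -> T \subset K.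
Proof.
move=> nilT sTK; rewrite -(nilpotent_Fitting nilT) FittingEgen gen_subG.
by apply/bigcupsP => r _; apply: sTK.
Qed.

Variables T L : {group gT}.
Hypotheses (nTL : L \subset 'N(T)) (nilT : nilpotent T) (nilL : nilpotent L).
Hypothesis centL : forall p r, p != r -> 'O_p(L) \subset 'C('O_r(T)).

Lemma pcores_join_normal p : 'O_p(T) <*> 'O_p(L) <| T <*> L.
Proof.
rewrite /normal !join_subG !(subset_trans (pcore_sub _ _)) ?joing_subl ?joing_subr //=.
apply/andP; split; apply: nilpotent_pcores_subG => // r; have [-> | neqrp] := eqVneq r p.
- exact: subset_trans (joing_subl _ _) (normG _).
- rewrite (subset_trans _ (cent_sub _)) // centY subsetI pcore_cent_pcore //=.
  by rewrite centsC centL // eq_sym.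
- exact: subset_trans (joing_subr _ _) (normG _).
- rewrite (subset_trans _ (cent_sub _)) // centY subsetI centL //=.
  by rewrite centsC pcore_cent_pcore // eq_sym.
Qed.

Lemma pcores_join_pgroup p : p.-group ('O_p(T) <*> 'O_p(L)).
Proof.
have nOpTL : 'O_p(L) \subset 'N('O_p(T)).
  exact: subset_trans (pcore_sub _ _) (char_norm_trans (pcore_char _ _) nTL).
by rewrite norm_joinEr // pgroupM !pcore_pgroup.
Qed.

Lemma nilpotent_join : nilpotent (T <*> L).
Proof.
have sOF p : 'O_p(T) <*> 'O_p(L) \subset 'F(T <*> L).
  exact: Fitting_max (pcores_join_normal p) (pgroup_nil (pcores_join_pgroup p)).
apply: nilpotentS (Fitting_nil (T <*> L)).
rewrite join_subG; apply/andP; split; apply: nilpotent_pcores_subG => // r.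
  exact: subset_trans (joing_subl _ _) (sOF r).
exact: subset_trans (joing_subr _ _) (sOF r).
Qed.

End NilpotentJoin.

Section SkewBracePerms.
Variables (A : finType) (B : skew_brace A).
Local Notation "a ⊕ b" := (sb_add B a b) (at level 50, left associativity).
Local Notation "⊖ a" := (sb_opp B a) (at level 35).
Local Notation "a ⊙ b" := (sb_circ B a b) (at level 40, left associativity).

Lemma sb_addKl a b : ⊖ a ⊕ (a ⊕ b) = b.
Proof. by rewrite sb_addA sb_addNl sb_add0l. Qed.

Lemma sb_add_inj a : injective (sb_add B a).
Proof. by move=> x y eq_axy; rewrite -(sb_addKl a x) eq_axy sb_addKl. Qed.

Lemma sb_circKl a b : sb_inv B a ⊙ (a ⊙ b) = b.
Proof. by rewrite sb_circA sb_circVl sb_circ1l. Qed.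

Lemma sb_circ_inj a : injective (sb_circ B a).
Proof. by move=> x y eq_axy; rewrite -(sb_circKl a x) eq_axy sb_circKl. Qed.

Lemma mem_add_genP (X : {set A}) (x : A) :
  reflect (forall S : {set A}, X \subset S -> is_add_subgroup B S -> x \in S)
          (x \in add_gen B X).
Proof.
rewrite inE; apply: (iffP forallP) => [genx S sXS subS | genx S].
  by apply: (implyP (genx S)); rewrite sXS.
by apply/implyP => /andP[]; apply: genx.
Qed.

Lemma zero_left_series k : sb_zero B \in left_series B k.
Proof.
case: k => [|k]; first by rewrite inE.
by apply/mem_add_genP => S _ /and3P[].
Qed.

Definition add_perm (a : A) : {perm A} := perm (@sb_add_inj a).
Definition circ_perm (a : A) : {perm A} := perm (@sb_circ_inj a).
Definition lambda_perm (a : A) : {perm A} := circ_perm a * add_perm (⊖ a).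

Lemma add_permE a x : add_perm a x = a ⊕ x. Proof. by rewrite permE. Qed.
Lemma circ_permE a x : circ_perm a x = a ⊙ x. Proof. by rewrite permE. Qed.

Lemma add_permM a b : add_perm a * add_perm b = add_perm (b ⊕ a).
Proof. by apply/permP => x; rewrite permM !add_permE sb_addA. Qed.

Lemma add_perm0 : add_perm (sb_zero B) = 1.
Proof. by apply/permP => x; rewrite perm1 add_permE sb_add0l. Qed.

Lemma add_permV a : (add_perm a)^-1 = add_perm (⊖ a).
Proof.
by apply: (mulgI (add_perm a)); rewrite mulgV add_permM sb_addNl add_perm0.
Qed.

Lemma add_perm_inj : injective add_perm.
Proof.
move=> a b /(congr1 (fun s : {perm A} => s (sb_zero B))).
by rewrite !add_permE !sb_add0r.
Qed.

Lemma circ_permM a b : circ_perm a * circ_perm b = circ_perm (b ⊙ a).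
Proof. by apply/permP => x; rewrite permM !circ_permE sb_circA. Qed.

Lemma circ_perm1 : circ_perm (sb_one B) = 1.
Proof. by apply/permP => x; rewrite perm1 circ_permE sb_circ1l. Qed.

Lemma circ_perm_inj : injective circ_perm.
Proof.
move=> a b /(congr1 (fun s : {perm A} => s (sb_one B))).
by rewrite !circ_permE !sb_circ1r.
Qed.

Lemma add_permJ a b : add_perm b ^ circ_perm a = add_perm (a ⊙ b ⊕ ⊖ a).
Proof.
have comm : add_perm b * circ_perm a = circ_perm a * add_perm (a ⊙ b ⊕ ⊖ a).
  by apply/permP => x; rewrite !permM !add_permE !circ_permE sb_brace.
by rewrite conjgE comm mulKg.
Qed.

Lemma add_perm_star a b : add_perm (sb_star B a b) = [~ add_perm b, lambda_perm a].
Proof.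
have comm : add_perm b * lambda_perm a =
            lambda_perm a * add_perm b * add_perm (sb_star B a b).
  apply/permP => x; rewrite !permM !add_permE !circ_permE /sb_star sb_brace.
  by rewrite !sb_addA -[_ ⊕ ⊖ b ⊕ b]sb_addA sb_addNl sb_add0r.
by rewrite commgEl conjgE comm -(mulgA (lambda_perm a)) !mulKg.
Qed.

Definition add_perms := [set add_perm a | a : A].
Definition circ_perms := [set circ_perm a | a : A].

Fact add_perms_group_set : group_set add_perms.
Proof.
apply/group_setP; split; first by rewrite -add_perm0 imset_f.
by move=> _ _ /imsetP[a _ ->] /imsetP[b _ ->]; rewrite add_permM imset_f.
Qed.
Canonical add_perms_group := Group add_perms_group_set.

Fact circ_perms_group_set : group_set circ_perms.
Proof.
apply/group_setP; split; first by rewrite -circ_perm1 imset_f.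
by move=> _ _ /imsetP[a _ ->] /imsetP[b _ ->]; rewrite circ_permM imset_f.
Qed.
Canonical circ_perms_group := Group circ_perms_group_set.

Lemma card_add_perms : #|add_perms| = #|A|.
Proof. by rewrite card_imset //; apply: add_perm_inj. Qed.

Lemma card_circ_perms : #|circ_perms| = #|A|.
Proof. by rewrite card_imset //; apply: circ_perm_inj. Qed.

Lemma circ_perms_norm : circ_perms \subset 'N(add_perms).
Proof.
apply/subsetP => _ /imsetP[a _ ->]; rewrite inE.
by apply/subsetP => _ /imsetP[_ /imsetP[b _ ->] ->]; rewrite add_permJ imset_f.
Qed.

Lemma left_series_lcn (G : {group {perm A}}) k x :
    add_perms \subset G -> circ_perms \subset G ->
  x \in left_series B k -> add_perm x \in 'L_k.+1(G).
Proof.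
move=> sTG sLG; have T_G a : add_perm a \in G by rewrite (subsetP sTG) ?imset_f.
have L_G a : circ_perm a \in G by rewrite (subsetP sLG) ?imset_f.
elim: k x => [|k IHk] x; first by move=> _; apply: T_G.
move=> /mem_add_genP/(_ [set y | add_perm y \in 'L_k.+2(G)]); rewrite inE; apply.
  apply/subsetP => _ /imset2P[a b _ b_k ->].
  by rewrite inE add_perm_star mem_commg ?IHk // groupM.
apply/and3P; split.
- by rewrite inE add_perm0 group1.
- apply/forall_inP => y; rewrite inE => y_k; apply/forall_inP => z; rewrite inE => z_k.
  by rewrite inE -add_permM groupM.
- by apply/forall_inP => y; rewrite !inE -add_permV groupV.
Qed.

Lemma left_nilpotent_of_nil :
  nilpotent (add_perms <*> circ_perms) -> left_nilpotent B.
Proof.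
case/lcnP => k lcn1; exists k; apply/setP => x; rewrite inE.
apply/idP/eqP => [x_k | ->]; last exact: zero_left_series.
have := left_series_lcn (joing_subl _ _) (joing_subr _ _) x_k.
by rewrite lcn1 inE -add_perm0 => /eqP/add_perm_inj.
Qed.

End SkewBracePerms.

Local Close Scope group_scope.

Section SemidirectBrace.
Variables (F : finFieldType) (N : nat) (u : {unit F}).
Hypotheses (N_gt1 : 1 < N) (u_order : #[u]%g %| N).
Local Open Scope ring_scope.

Definition upow (i : 'Z_N) : F := val (u ^+ i)%g.

Lemma upowD i j : upow (i + j) = upow i * upow j.
Proof.
have u_order' : (#[u]%g %| (Zp_trunc N).+2)%N by rewrite Zp_cast.
rewrite /upow -FinRing.val_unitM -expgD -(expg_mod_order u (i + j)%R).
by rewrite -[in RHS](expg_mod_order u) /= (modn_dvdm _ u_order').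
Qed.

Lemma upow0 : upow 0 = 1.
Proof. by rewrite /upow expg0 FinRing.val_unit1. Qed.

Lemma upow1 : upow 1 = val u.
Proof. by rewrite /upow /= Zp_cast // modn_small // expg1. Qed.

Local Notation sdT := (F * 'Z_N)%type.

Definition sd_circ (a b : sdT) : sdT := (a.1 + upow a.2 * b.1, a.2 + b.2).
Definition sd_inv (a : sdT) : sdT := (- (upow (- a.2) * a.1), - a.2).

Definition sdbrace : skew_brace sdT.
Proof.
refine (@SkewBrace sdT +%R 0 -%R sd_circ 0 sd_inv _ _ _ _ _ _ _ _ _ _ _).
- exact: addrA.
- exact: add0r.
- exact: addr0.
- exact: addNr.
- exact: addrN.
- by move=> [a1 a2] [b1 b2] [c1 c2]; congr pair; rewrite /= ?upowD; ring.
- by move=> [a1 a2]; congr pair; rewrite /= ?upow0; ring.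
- by move=> [a1 a2]; congr pair; rewrite /=; ring.
- by move=> [a1 a2]; congr pair; rewrite /=; ring.
- move=> [a1 a2]; congr pair; rewrite /= ?subrr //.
  transitivity (a1 - upow (a2 - a2) * a1); first by rewrite upowD; ring.
  by rewrite subrr upow0 mul1r subrr.
- by move=> [a1 a2] [b1 b2] [c1 c2]; congr pair; rewrite /=; ring.
Defined.

Hypothesis u_neq1 : u != 1%g.

Lemma sdbrace_left_series k y : (y, 0) \in left_series sdbrace k.
Proof.
elim: k y => [|k IHk] y; first by rewrite inE.
apply/mem_add_genP => S sXS _.
have u1_neq0 : val u - 1 != 0.
  by rewrite subr_eq0; apply: contra u_neq1 => /eqP eq_u1; apply/eqP/val_inj.
apply/(subsetP sXS)/imset2P; exists (0, 1) ((val u - 1)^-1 * y, 0) => //.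
rewrite /sb_star /=; congr pair; rewrite /= ?upow1 /=; [by field | ring].
Qed.

Lemma sdbrace_not_left_nilpotent : ~ left_nilpotent sdbrace.
Proof.
case=> k series_k; have := sdbrace_left_series k 1.
by rewrite series_k inE xpair_eqE oner_eq0.
Qed.

End SemidirectBrace.

Lemma pazderski_left_nilpotent n (A : finType) (B : skew_brace A) :
  0 < n -> pazderski n -> #|A| = n -> left_nilpotent B.
Proof.
move=> n_gt0 nP cardA; apply/left_nilpotent_of_nil/nilpotent_join.
- exact: circ_perms_norm.
- by apply: pazderski_nilpotent n_gt0 nP _; rewrite (card_add_perms B) cardA.
- by apply: pazderski_nilpotent n_gt0 nP _; rewrite (card_circ_perms B) cardA.
move=> p q neqpq; apply: (pazderski_norm_cent n_gt0 nP neqpq) (pcore_pgroup _ _) _ _ _ _.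
- exact: pcore_pgroup.
- apply: subset_trans (pcore_sub _ _) _.
  exact: char_norm_trans (pcore_char _ _) (circ_perms_norm B).
- by rewrite -cardA -(card_circ_perms B) cardSg ?pcore_sub.
- by rewrite -cardA -(card_add_perms B) cardSg ?pcore_sub.
Qed.

Lemma not_pazderski_brace n p q k :
    0 < n -> p \in primes n -> q \in primes n -> p != q ->
    1 <= k <= logn q n -> p %| q ^ k - 1 ->
  exists (A : finType) (B : skew_brace A), #|A| = n /\ ~ left_nilpotent B.
Proof.
move=> n_gt0 pn qn neqpq /andP[k_gt0 le_k] p_dvd.
have [[pr_p p_dvd_n] [pr_q _]] : (prime p /\ p %| n) /\ (prime q /\ q %| n).
  by move: pn qn; rewrite !mem_primes => /and3P[-> _ ->] /and3P[-> _ ->].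
have [F _ cardF] := pPrimePowerField pr_q k_gt0.
have qk_dvd_n : q ^ k %| n by rewrite pfactor_dvdn.
have p_dvd_m : p %| n %/ q ^ k.
  have p_coprime_qk : coprime p (q ^ k).
    by rewrite coprimeXr // prime_coprime // dvdn_prime2.
  by rewrite -(Gauss_dvdl _ p_coprime_qk) divnK.
have [u _ ord_u] : {u : {unit F} | u \in [set: {unit F}] & #[u]%g = p}.
  by apply: Cauchy; rewrite // card_finField_unit cardF -subn1.
have m_gt1 : 1 < n %/ q ^ k.
  apply: leq_trans (prime_gt1 pr_p) (dvdn_leq _ p_dvd_m).
  by rewrite divn_gt0 ?expn_gt0 ?prime_gt0 // dvdn_leq.
have u_neq1 : u != 1%g by rewrite -order_eq1 ord_u neq_ltn prime_gt1 ?orbT.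
have u_order : #[u]%g %| n %/ q ^ k by rewrite ord_u.
exists (F * 'Z_(n %/ q ^ k))%type, (sdbrace m_gt1 u_order); split.
  by rewrite card_prod cardF card_ord Zp_cast // mulnC divnK.
exact: sdbrace_not_left_nilpotent.
Qed.

Theorem theorem5p2 (n : nat) (n_gt0 : 0 < n) :
  (forall (A : finType) (B : skew_brace A), #|A| = n -> left_nilpotent B) <->
  (forall p q : nat, p \in primes n -> q \in primes n -> p != q ->
     forall k : nat, 1 <= k <= logn q n -> ~~ (p %| q ^ k - 1)).
Proof.
split=> [all_lnil p q pn qn neqpq k k_range | nP A B cardA].
  apply/negP => p_dvd.
  have [A [B [cardA not_lnil]]] := not_pazderski_brace n_gt0 pn qn neqpq k_range p_dvd.
  exact/not_lnil/all_lnil.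
exact: pazderski_left_nilpotent n_gt0 nP cardA.
Qed.
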